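(* Let $M$ be a $\lambda$-term. If $M$ is typable in the system $E^S_A$ (i.e. some judgment $\Delta\vdash M:a$ is derivable), then the head reduction of $M$ ends.
   Context: $[n]=\{1,\dots,n\}$. Fix a class $\mathcal C$ of functions between finite ordinals equal to one of: all bijections, all injections, all surjections, all functions. For a small category $X$, $SX$ has finite lists of objects of $X$ as objects and morphisms $\langle x_1,\dots,x_n\rangle\to\langle y_1,\dots,y_m\rangle$ the tuples $\langle\alpha,f_1,\dots,f_m\rangle$ with $\alpha:[m]\to[n]$ in $\mathcal C$, $f_i:x_{\alpha(i)}\to y_i$; composite of $\langle\alpha,\vec f\rangle$ then $\langle\beta,\vec g\rangle$ is $\langle\alpha\circ\beta,(g_i\circ f_{\beta(i)})_i\rangle$; tensor $\oplus$ = concatenation, unit $\langle\rangle$. Fix a small category $A$. $D=D_A$ is the colimit of $D_0=A$, $D_{k+1}=(SD_k)^{o}\times D_k\sqcup A$: objects $a::=o\mid\langle a_1,\dots,a_k\rangle\Rightarrow a$ ($o\in\mathrm{Ob}(A)$); morphisms are those of $A$ and $\langle\alpha,\vec f\rangle\Rightarrow f:(\vec a\Rightarrow a)\to(\vec a'\Rightarrow a')$ for $\langle\alpha,\vec f\rangle:\vec a'\to\vec a$ in $SD$, $f:a\to a'$. $SD=S(D_A)$. Contexts are $\Delta=\langle\vec a_1,\dots,\vec a_n\rangle\in(SD)^n$, written $x_1:\vec a_1,\dots,x_n:\vec a_n$; $\otimes$ is componentwise concatenation. Type system $E^S_A$: (Var) given morphisms $f_j:\vec a_j\to\langle\rangle$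 ($j\ne i$) and $f_i:\vec a_i\to\langle a\rangle$ in $SD$, infer $x_1:\vec a_1,\dots,x_n:\vec a_n\vdash x_i:a$; (Abs) from $\Delta,x:\vec a\vdash M:a$ infer $\Delta\vdash\lambda x.M:\vec a\Rightarrow a$; (App) from $\Gamma_0\vdash M:\langle a_1,\dots,a_k\rangle\Rightarrow a$, $\Gamma_i\vdash N:a_i$ ($1\le i\le k$) and a morphism $\eta:\Delta\to\bigotimes_{i=0}^k\Gamma_i$ in $(SD)^n$, infer $\Delta\vdash MN:a$. Head reduction: $H(M)=M$ if $M=\lambda\vec y.\,y\vec N$, and $H(M)=\lambda\vec y.\,P[N/x]\vec N$ if $M=\lambda\vec y.(\lambda x.P)N\vec N$; the head reduction of $M$ ends if iterating $H$ reaches a term $M'$ with $H(M')=M'$. *)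

From mathcomp Require Import all_boot.
Set Implicit Arguments.
Unset Strict Implicit.
Unset Printing Implicit Defensive.

Record category := Category {
  Ob : Type;
  Hom : Ob -> Ob -> Type;
  idm : forall a, Hom a a;
  (* diagrammatic order: comp f g = g o f *)
  comp : forall a b c, Hom a b -> Hom b c -> Hom a c;
  comp_idl : forall a b (f : Hom a b), comp (idm a) f = f;
  comp_idr : forall a b (f : Hom a b), comp f (idm b) = f;
  comp_assoc : forall a b c d (f : Hom a b) (g : Hom b c) (h : Hom c d),
      comp (comp f g) h = comp f (comp g h)
}.

(* [n] = {1..n} is represented by 'I_n = {0..n-1}. *)
Inductive fclass := CBij | CInj | CSurj | CAll.

Definition in_class (c : fclass) m n (al : 'I_m -> 'I_n) : Prop :=
  match c with
  | CBij => bijective al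
  | CInj => injective al
  | CSurj => forall y, exists x, al x = y
  | CAll => True
  end.

Section DA.
Variables (c : fclass) (A : category).

(* objects of D_A:  a ::= o | <a_1,...,a_k> => a *)
Inductive dty : Type :=
| DBase (o : Ob A)
| DArr (l : seq dty) (a : dty).

(* dhom a b : morphisms a -> b of D_A;
   shom xs ys : morphisms <x_1..x_n> -> <y_1..y_m> of S(D_A), i.e.
   <alpha, f_1..f_m> with alpha : [m] -> [n] in C and f_i : x_(alpha i) -> y_i. *)
Inductive dhom : dty -> dty -> Type :=
| dhom_base (o o' : Ob A) (f : Hom o o') : dhom (DBase o) (DBase o')
| dhom_arr (l l' : seq dty) (a a' : dty) (s : shom l' l) (f : dhom a a') :
    dhom (DArr l a) (DArr l' a')
with shom : seq dty -> seq dty -> Type :=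
| shom_mk (xs ys : seq dty) (al : 'I_(size ys) -> 'I_(size xs))
    (Hal : in_class c al)
    (fs : forall i : 'I_(size ys), dhom (tnth (in_tuple xs) (al i)) (tnth (in_tuple ys) i)) :
    shom xs ys.

(* contexts Delta in (SD)^n : the n-th component is the list of types of x_n.
   We store contexts with the most recently bound variable first (de Bruijn). *)
Definition ctx := seq (seq dty).

Definition ctxhom (D G : ctx) : Type :=
  ((size D = size G) *
   (forall j : 'I_(size D), shom (nth [::] D j) (nth [::] G j)))%type.

Definition ctx_tensor (G G' : ctx) : ctx := [seq x.1 ++ x.2 | x <- zip G G'].
Definition ctx_bigtensor (n : nat) (Gs : seq ctx) : ctx :=
  foldr ctx_tensor (nseq n [::]) Gs.

End DA.

Inductive term : Type :=
| Var (i : nat)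
| Lam (M : term)
| App (M N : term).

Fixpoint lift (k cut : nat) (M : term) : term :=
  match M with
  | Var i => if cut <= i then Var (i + k) else Var i
  | Lam P => Lam (lift k cut.+1 P)
  | App P Q => App (lift k cut P) (lift k cut Q)
  end.

Fixpoint subst (N : term) (cut : nat) (P : term) : term :=
  match P with
  | Var i => if i == cut then lift cut 0 N
             else if cut < i then Var i.-1 else Var i
  | Lam Q => Lam (subst N cut.+1 Q)
  | App Q R => App (subst N cut Q) (subst N cut R)
  end.

(* one head step: lam ys.(lam x.P) N Ns  |->  lam ys. P[N/x] Ns ;
   None iff the term has the form lam ys. y Ns *)
Fixpoint hstep (M : term) : option term :=
  match M with
  | Var _ => None
  | Lam P => omap Lam (hstep P)
  | App (Lam P) N => Some (subst N 0 P)
  | App P N => omap (fun P' => App P' N) (hstep P)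
  end.

Definition H (M : term) : term :=
  if hstep M is Some M' then M' else M.

Definition head_normal (M : term) : Prop := hstep M = None.

Definition head_red_ends (M : term) : Prop :=
  exists k, head_normal (iter k H M).

Inductive typing (c : fclass) (A : category) : ctx A -> term -> dty A -> Prop :=
| ty_var (D : ctx A) (i : nat) (a : dty A) (Hi : i < size D)
    (fo : forall j : 'I_(size D), nat_of_ord j != i -> shom c (nth [::] D j) [::])
    (fi : shom c (nth [::] D i) [:: a]) :
    typing c D (Var i) a
| ty_abs (D : ctx A) (l : seq (dty A)) (M : term) (a : dty A) :
    typing c (l :: D) M a -> typing c D (Lam M) (DArr l a)
| ty_app (D G0 : ctx A) (M N : term) (GA : seq (ctx A * dty A)) (a : dty A)
    (HM : typing c G0 M (DArr (map snd GA) a))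
    (HN : forall i : 'I_(size GA),
        typing c (tnth (in_tuple GA) i).1 N (tnth (in_tuple GA) i).2)
    (Hsz : all (fun G => size G == size D) (G0 :: map fst GA))
    (eta : ctxhom c D (ctx_bigtensor (size D) (G0 :: map fst GA))) :
    typing c D (App M N) a.

From Pilot Require Import Defs.
From mathcomp Require Import all_boot.

Set Implicit Arguments.
Unset Strict Implicit.
Unset Printing Implicit Defensive.

(** A Tait-style reducibility argument. Interpret an object of [D_A] as a
    set of terms: a base object denotes the terms whose head reduction
    ends, and [<a_1,...,a_k> => a] denotes the terms [M] such that [M N]
    is in [a] for every [N] lying in all the [a_i] simultaneously.
    Neutral terms [y N_1 ... N_m] belong to every such set, every set is
    closed under head expansion, and morphisms of [D_A] (contravariant in
    the arguments of an arrow) are inclusions, whatever the class [C].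
    Hence every typable term with its free variables substituted by
    reducible terms is reducible; substituting the variables themselves,
    a typable term is reducible, and a reducible [M] head-normalizes
    because [M x] does. *)

Definition up_ren (r : nat -> nat) (i : nat) : nat :=
  if i is j.+1 then (r j).+1 else 0.

Fixpoint rename (r : nat -> nat) (M : term) : term :=
  match M with
  | Var i => Var (r i)
  | Lam P => Lam (rename (up_ren r) P)
  | App P Q => App (rename r P) (rename r Q)
  end.

Definition up_subst (s : nat -> term) (i : nat) : term :=
  if i is j.+1 then rename succn (s j) else Var 0.

Fixpoint psubst (s : nat -> term) (M : term) : term :=
  match M with
  | Var i => s i
  | Lam P => Lam (psubst (up_subst s) P)
  | App P Q => App (psubst s P) (psubst s Q)
  end.

Definition scons (N : term) (s : nat -> term) (i : nat) : term :=
  if i is j.+1 then s j else N.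

Lemma rename_ext M r r' : r =1 r' -> rename r M = rename r' M.
Proof.
elim: M r r' => [i|P IH|P IHP Q IHQ] r r' E /=; first by rewrite E.
- by rewrite (IH _ (up_ren r')) // => -[|j] //=; rewrite E.
- by rewrite (IHP _ r') // (IHQ _ r').
Qed.

Lemma psubst_ext M s s' : s =1 s' -> psubst s M = psubst s' M.
Proof.
elim: M s s' => [i|P IH|P IHP Q IHQ] s s' E /=; first by rewrite E.
- by rewrite (IH _ (up_subst s')) // => -[|j] //=; rewrite E.
- by rewrite (IHP _ s') // (IHQ _ s').
Qed.

Lemma rename_comp M r r' : rename r (rename r' M) = rename (r \o r') M.
Proof.
elim: M r r' => [i|P IH|P IHP Q IHQ] r r' //=; last by rewrite IHP IHQ.
by rewrite IH; congr Lam; apply: rename_ext => -[|j].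
Qed.

Lemma psubst_rename M s r : psubst s (rename r M) = psubst (s \o r) M.
Proof.
elim: M s r => [i|P IH|P IHP Q IHQ] s r //=; last by rewrite IHP IHQ.
by rewrite IH; congr Lam; apply: psubst_ext => -[|j].
Qed.

Lemma rename_psubst M r s : rename r (psubst s M) = psubst (rename r \o s) M.
Proof.
elim: M r s => [i|P IH|P IHP Q IHQ] r s //=; last by rewrite IHP IHQ.
rewrite IH; congr Lam; apply: psubst_ext => -[|j] //=.
by rewrite !rename_comp; apply: rename_ext.
Qed.

Lemma psubst_comp M s t : psubst s (psubst t M) = psubst (psubst s \o t) M.
Proof.
elim: M s t => [i|P IH|P IHP Q IHQ] s t //=; last by rewrite IHP IHQ.
rewrite IH; congr Lam; apply: psubst_ext => -[|j] //=.
by rewrite psubst_rename rename_psubst; apply: psubst_ext.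
Qed.

Lemma psubst_var_ext M s : s =1 Var -> psubst s M = M.
Proof.
elim: M s => [i|P IH|P IHP Q IHQ] s E /=; first by rewrite E.
- by rewrite IH // => -[|j] //=; rewrite E.
- by rewrite IHP // IHQ.
Qed.

Lemma psubst_var M : psubst Var M = M.
Proof. exact: psubst_var_ext. Qed.

Lemma psubst_scons_up N s M :
  psubst (scons N Var) (psubst (up_subst s) M) = psubst (scons N s) M.
Proof.
rewrite psubst_comp; apply: psubst_ext => -[|j] //=.
by rewrite psubst_rename psubst_var_ext.
Qed.

Lemma lift_rename k cut M :
  Defs.lift k cut M = rename (fun i => if cut <= i then i + k else i) M.
Proof.
elim: M cut => [i|P IH|P IHP Q IHQ] cut /=; first by case: ifP.
  rewrite IH; congr Lam; apply: rename_ext => -[|j] //=.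
  by rewrite ltnS; case: ifP.
by rewrite IHP IHQ.
Qed.

Lemma lift0 cut M : Defs.lift 0 cut M = M.
Proof.
elim: M cut => [i|P IH|P IHP Q IHQ] cut /=; last by rewrite IHP IHQ.
- by rewrite addn0; case: ifP.
- by rewrite IH.
Qed.

Definition subst_at (N : term) (cut i : nat) : term :=
  if i == cut then Defs.lift cut 0 N else if cut < i then Var i.-1 else Var i.

Lemma subst_psubst N cut P : subst N cut P = psubst (subst_at N cut) P.
Proof.
elim: P cut => [i|P IH|P IHP Q IHQ] cut //=; last by rewrite IHP IHQ.
rewrite IH; congr Lam; apply: psubst_ext => -[|j] //=.
rewrite /subst_at eqSS ltnS; case: ifP => _; last by case: ifP => //; case: j.
by rewrite !lift_rename rename_comp; apply: rename_ext => i /=; rewrite addnS.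
Qed.

Lemma subst0_psubst N P : subst N 0 P = psubst (scons N Var) P.
Proof.
by rewrite subst_psubst; apply: psubst_ext => -[|j] //; rewrite /subst_at lift0.
Qed.

Lemma psubst_subst0 s N P :
  psubst s (subst N 0 P) = subst (psubst s N) 0 (psubst (up_subst s) P).
Proof.
rewrite !subst0_psubst psubst_scons_up psubst_comp.
by apply: psubst_ext => -[|j].
Qed.

Definition is_lam (M : term) : bool := if M is Lam _ then true else false.

Lemma hstep_app M N :
  ~~ is_lam M -> hstep (App M N) = omap (App^~ N) (hstep M).
Proof. by case: M. Qed.

Lemma hstep_psubst s P P' :
  hstep P = Some P' -> hstep (psubst s P) = Some (psubst s P').
Proof.
elim: P P' s => [i|P IH|P IHP Q _] P' s //.
  by rewrite /=; case E: (hstep P) => [R|] //= [<-]; rewrite (IH R).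
case: P IHP => [i|P|P1 P2] IHP //.
- by move=> [<-]; rewrite psubst_subst0.
- rewrite [psubst _ _]/= (hstep_app (M := App P1 P2)) //.
  rewrite (hstep_app (M := App _ _)) //.
  by case E: (hstep (App P1 P2)) => [R|] //= [<-]; have /= -> := IHP R s.
Qed.

Lemma H_hstep M M' : hstep M = Some M' -> H M = M'.
Proof. by rewrite /H => ->. Qed.

Lemma head_red_ends_nf M : hstep M = None -> head_red_ends M.
Proof. by exists 0. Qed.

Lemma head_red_ends_hstep M M' :
  hstep M = Some M' -> head_red_ends M <-> head_red_ends M'.
Proof.
move=> E; split=> [[[|k] hk]|[k hk]].
- by move: hk; rewrite /head_normal /= E.
- by exists k; rewrite -(H_hstep E) -iterSr.
- by exists k.+1; rewrite iterSr (H_hstep E).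
Qed.

Lemma head_red_ends_psubst s P : head_red_ends (psubst s P) -> head_red_ends P.
Proof.
case=> k; elim: k P => [|k IH] P hk; case E: (hstep P) => [P'|];
  try exact: head_red_ends_nf.
- by move: hk; rewrite /head_normal /= (hstep_psubst s E).
- apply/(head_red_ends_hstep E)/IH.
  by rewrite -(H_hstep (hstep_psubst s E)) -iterSr.
Qed.

Lemma iter_H_lam k P : iter k H (Lam P) = Lam (iter k H P).
Proof. by elim: k => //= k ->; rewrite /H /=; case: hstep. Qed.

Lemma head_red_ends_lam P : head_red_ends P -> head_red_ends (Lam P).
Proof. by case=> k hk; exists k; rewrite iter_H_lam /head_normal /= hk. Qed.

Lemma head_red_ends_appl M N : head_red_ends (App M N) -> head_red_ends M.
Proof.
have lam_app P : head_red_ends (App (Lam P) N) -> head_red_ends (Lam P).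
  have beta : hstep (App (Lam P) N) = Some (subst N 0 P) by [].
  move/(head_red_ends_hstep beta); rewrite subst0_psubst.
  by move/head_red_ends_psubst/head_red_ends_lam.
case=> k; elim: k M => [|k IH] M hk.
all: case: (boolP (is_lam M)) => [|notlam];
  first by case: M hk => // P hk _; apply: lam_app; eexists; exact: hk.
all: case E: (hstep M) => [M'|]; last exact: head_red_ends_nf.
all: have E' : hstep (App M N) = Some (App M' N) by rewrite hstep_app ?E.
- by move: hk; rewrite /head_normal [iter _ _ _]/= E'.
- by apply/(head_red_ends_hstep E)/(IH M'); rewrite -(H_hstep E') -iterSr.
Qed.

Definition apps (M : term) (Ns : seq term) : term := foldl App M Ns.

Lemma apps_rcons M Ns N : apps M (rcons Ns N) = App (apps M Ns) N.
Proof. by rewrite /apps foldl_rcons. Qed.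

Lemma is_lam_apps M Ns : ~~ is_lam M -> ~~ is_lam (apps M Ns).
Proof. by case/lastP: Ns => // Ns N; rewrite apps_rcons. Qed.

Lemma hstep_apps M Ns :
  ~~ is_lam M -> hstep (apps M Ns) = omap (apps^~ Ns) (hstep M).
Proof.
move=> notlam; elim/last_ind: Ns => [|Ns N IH]; first by case: hstep.
rewrite apps_rcons hstep_app ?is_lam_apps // IH.
by case: hstep => //= M'; rewrite apps_rcons.
Qed.

(** A fold rather than an inductive predicate, so that the fixpoint
    [reducible] below may recurse through it. *)
Definition all_sat (T : Type) (P : T -> Prop) (s : seq T) : Prop :=
  foldr (fun x Q => P x /\ Q) True s.

Lemma all_sat_cat T (P : T -> Prop) s1 s2 :
  all_sat P (s1 ++ s2) <-> all_sat P s1 /\ all_sat P s2.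
Proof.
elim: s1 => [|x s1 IH] /=; first by split=> // -[].
by split=> [[Px /IH[h1 h2]]|[[Px h1] h2]] //; split=> //; apply/IH.
Qed.

Lemma all_sat_flatten T (P : T -> Prop) ss :
  all_sat P (flatten ss) <-> all_sat (all_sat P) ss.
Proof.
elim: ss => //= s ss IH.
by split=> [/all_sat_cat[? /IH]|[? /IH ?]] //; apply/all_sat_cat.
Qed.

Lemma all_sat_map T U (P : U -> Prop) (f : T -> U) s :
  all_sat P (map f s) = all_sat (P \o f) s.
Proof. by elim: s => //= x s ->. Qed.

Lemma all_sat_tnth T (P : T -> Prop) s :
  all_sat P s <-> forall i : 'I_(size s), P (tnth (in_tuple s) i).
Proof.
elim: s => [|x s IH] /=; first by split=> // _ [].
split=> [[Px /IH-Ps] [[|j] lt_j]|Ps]; rewrite ?(tnth_nth x) //=.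
- by have := Ps (Ordinal (lt_j : j < size s)); rewrite (tnth_nth x).
- split; first by have := Ps ord0; rewrite (tnth_nth x).
  by apply/IH => i; have := Ps (lift ord0 i); rewrite !(tnth_nth x).
Qed.

Section Reducibility.
Variable A : category.

Fixpoint reducible (a : dty A) (M : term) {struct a} : Prop :=
  match a with
  | DBase _ => head_red_ends M
  | DArr l b => forall N, all_sat (reducible^~ N) l -> reducible b (App M N)
  end.

Definition reducible_seq (l : seq (dty A)) (N : term) : Prop :=
  all_sat (reducible^~ N) l.

Lemma reducible_neutral a i Ns : reducible a (apps (Var i) Ns).
Proof.
elim: a Ns => [o|l b IH] Ns /=; last by move=> N _; rewrite -apps_rcons.
by apply: head_red_ends_nf; rewrite hstep_apps.
Qed.

Lemma reducible_seq_var l i : reducible_seq l (Var i).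
Proof. by apply/all_sat_tnth => k; apply: (reducible_neutral _ i [::]). Qed.

Lemma reducible_head_expand a P N Ns :
  reducible a (apps (subst N 0 P) Ns) -> reducible a (apps (App (Lam P) N) Ns).
Proof.
elim: a Ns => [o|l b IH] Ns /=.
  have beta : hstep (apps (App (Lam P) N) Ns) = Some (apps (subst N 0 P) Ns).
    by rewrite hstep_apps.
  by move=> red; apply/(head_red_ends_hstep beta).
move=> red N' redN'; rewrite -apps_rcons; apply: IH.
by rewrite apps_rcons; apply: red.
Qed.

Lemma reducible_head_red_ends a M : reducible a M -> head_red_ends M.
Proof.
elim: a M => [o|l b IH] M //= red.
exact: head_red_ends_appl (IH _ (red _ (reducible_seq_var l 0))).
Qed.

Variable c : fclass.

Scheme dhom_shom_ind := Induction for dhom Sort Prop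
  with shom_dhom_ind := Induction for shom Sort Prop.

Lemma reducible_seq_shom xs ys N :
  shom c xs ys -> reducible_seq xs N -> reducible_seq ys N.
Proof.
move=> f; move: xs ys f N; apply: (@shom_dhom_ind c A
  (fun a b _ => forall M, reducible a M -> reducible b M)
  (fun xs ys _ => forall N, reducible_seq xs N -> reducible_seq ys N)) => //.
- by move=> l l' a a' g IHg f IHf M /= red N /IHg /red /IHf.
- move=> xs ys al _ fs IH N /all_sat_tnth red; apply/all_sat_tnth => i.
  exact/IH/red.
Qed.

Definition reducible_env (D : ctx A) (s : nat -> term) : Prop :=
  forall j, reducible_seq (nth [::] D j) (s j).

Lemma reducible_env_var D : reducible_env D Var.
Proof. by move=> j; apply: reducible_seq_var. Qed.

Lemma reducible_env_ctxhom D G s :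
  ctxhom c D G -> reducible_env D s -> reducible_env G s.
Proof.
case=> eq_size f red j; case: (ltnP j (size D)) => [lt_jD|le_Dj].
  exact: reducible_seq_shom (f (Ordinal lt_jD)) (red j).
by rewrite nth_default // -eq_size.
Qed.

Lemma size_ctx_tensor (G G' : ctx A) :
  size G = size G' -> size (ctx_tensor G G') = size G.
Proof. by move=> eq_size; rewrite size_map size_zip eq_size minnn. Qed.

Lemma nth_ctx_tensor (G G' : ctx A) j : size G = size G' ->
  nth [::] (ctx_tensor G G') j = nth [::] G j ++ nth [::] G' j.
Proof.
move=> eq_size; case: (ltnP j (size G)) => [lt_jG|le_Gj].
  by rewrite (nth_map ([::], [::])) ?nth_zip // size_zip -eq_size minnn.
by rewrite !nth_default ?size_ctx_tensor // -eq_size.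
Qed.

Lemma ctx_bigtensor_spec n (Gs : seq (ctx A)) :
  all (fun G => size G == n) Gs ->
  size (ctx_bigtensor n Gs) = n /\
  forall j, nth [::] (ctx_bigtensor n Gs) j =
            flatten [seq nth [::] G j | G <- Gs].
Proof.
elim: Gs => [|G Gs IH] /=.
  by rewrite size_nseq; split=> // j; rewrite nth_nseq if_same.
case/andP=> /eqP size_G /IH[size_Gs nth_Gs]; split=> [|j].
  by rewrite size_ctx_tensor // size_G.
by rewrite nth_ctx_tensor ?nth_Gs // size_G.
Qed.

Lemma reducible_env_bigtensor n Gs s : all (fun G => size G == n) Gs ->
  reducible_env (ctx_bigtensor n Gs) s -> all_sat (reducible_env^~ s) Gs.
Proof.
case/ctx_bigtensor_spec=> _ nth_Gs red; apply/all_sat_tnth => i j.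
move: (red j); rewrite /reducible_seq nth_Gs => /all_sat_flatten.
by rewrite all_sat_map => /all_sat_tnth; apply.
Qed.

Lemma reducible_typing D M a s :
  typing c D M a -> reducible_env D s -> reducible a (psubst s M).
Proof.
move=> ty; elim: ty s => {D M a}.
- by move=> D i a _ _ f s /(_ i)/(reducible_seq_shom f) [].
- move=> D l M a _ IH s red N redN.
  apply: (reducible_head_expand (Ns := [::])).
  rewrite [apps _ _]/= subst0_psubst psubst_scons_up.
  by apply: IH => -[|j]; [exact: redN | exact: red j].
- move=> D G0 M N GA a _ IHM _ IHN size_Gs eta s red.
  have [redG0 redGA] :
      reducible_env G0 s /\ all_sat (reducible_env^~ s) [seq x.1 | x <- GA] :=
    reducible_env_bigtensor size_Gs (reducible_env_ctxhom eta red).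
  have redN : reducible_seq [seq x.2 | x <- GA] (psubst s N).
    rewrite /reducible_seq all_sat_map; apply/all_sat_tnth => i; apply: IHN.
    by move: redGA; rewrite all_sat_map => /all_sat_tnth; apply.
  exact: IHM s redG0 _ redN.
Qed.

End Reducibility.

Theorem lemma8 (c : fclass) (A : category) (M : term) (D : ctx A) (a : dty A) :
  typing c D M a -> head_red_ends M.
Proof.
move=> ty; rewrite -[M]psubst_var.
exact: reducible_head_red_ends (reducible_typing ty (reducible_env_var D)).
Qed.
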